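(* Let $n\ge2$ and $0\le m\le\lfloor n/2\rfloor$. For $z^n\in\mathcal Z^n$ let $\hat{\mathbf S}(z^n)=(\hat s_1,\dots,\hat s_n)$ be any minimizer of $\tilde L_{\mathbf S}(z^n)$ over $\mathbf S\in\mathcal S^n_{0,m}$, and let the $(0,m)$-S-DUDE be the denoiser with output $\hat X_t(z^n)=\hat s_t(z_t)$, $1\le t\le n$. Then for all $\epsilon>0$ and all $x^n\in\mathcal X^n$, $$\Pr\Big(L_{\hat{\mathbf S}(Z^n)}(x^n,Z^n)-D_{0,m}(x^n,Z^n)>\epsilon\Big)\le 2\exp\left(-n\Big[\frac{\epsilon^2}{2L_{\max}^2}-2\Big\{h\Big(\frac mn\Big)+\frac{(m+1)\ln N}{n}\Big\}\Big]\right),$$ where $h(x)=-x\ln x-(1-x)\ln(1-x)$ and $N=|\mathcal S|$. In particular the right-hand side is exponentially small in $n$ provided $m=o(n)$.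
   Context: Let $\mathcal X,\mathcal Z,\hat{\mathcal X}$ be finite alphabets and $\Pi=\{\Pi(x,z)\}$ a $|\mathcal X|\times|\mathcal Z|$ stochastic matrix (discrete memoryless channel) of full row rank. For deterministic $x^n\in\mathcal X^n$, the channel output $Z^n$ has independent components with $\Pr(Z_t=z)=\Pi(x_t,z)$. Fix a loss $\Lambda:\mathcal X\times\hat{\mathcal X}\to[0,\infty)$, $\Lambda_{\max}=\max_{x,\hat x}\Lambda(x,\hat x)$. Let $\mathcal S$ be the set of all maps $s:\mathcal Z\to\hat{\mathcal X}$. Fix a real $|\mathcal Z|\times|\mathcal X|$ matrix $H$ with $\Pi H=I$; $h(z)\in\mathbb R^{\mathcal X}$ is the column vector equal to the $z$-th row of $H$. For $s\in\mathcal S$, $\rho(s)\in\mathbb R^{\mathcal X}$ has components $\rho_x(s)=\sum_z\Lambda(x,s(z))\Pi(x,z)$, and $\ell(z,s)=h(z)^T\rho(s)$. Let $\ell_{\max}=\max_{z,s}\ell(z,s)-\min_{z,s}\ell(z,s)$, $L_{\max}=\Lambda_{\max}+\ell_{\max}$. For $\mathbf S=(s_1,\dots,s_n)\in\mathcal S^n$: $L_{\mathbf S}(x^n,z^n)=\frac1n\sum_{t=1}^n\Lambda(x_t,s_t(z_t))$ and $\tilde L_{\mathbf S}(z^n)=\frac1n\sum_{t=1}^n\ell(z_t,s_t)$. Let $\mathcal S^n_{0,m}=\{\mathbf S\in\mathcal S^n:\sum_{t=2}^n\mathbf 1_{\{s_{t-1}\ne s_t\}}\le m\}$ and $D_{0,m}(x^n,z^n)=\min_{\mathbf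 S\in\mathcal S^n_{0,m}}L_{\mathbf S}(x^n,z^n)$. *)

From HB Require Import structures.
From mathcomp Require Import all_boot all_order all_algebra.
From mathcomp Require Import all_classical all_reals sequences exp.
Set Implicit Arguments. Unset Strict Implicit. Unset Printing Implicit Defensive.
Import Order.TTheory GRing.Theory Num.Theory.
Local Open Scope ring_scope.

Section SDUDE.
Variables (R : realType) (X Z Xh : finType).
Variables (Pi : X -> Z -> R) (H : Z -> X -> R) (Lam : X -> Xh -> R).

Definition Sym := {ffun Z -> Xh}.

Definition Pi_mx : 'M[R]_(#|X|, #|Z|) :=
  \matrix_(i, j) Pi (enum_val i) (enum_val j).

Definition stochastic : Prop :=
  (forall x z, 0 <= Pi x z) /\ (forall x, \sum_z Pi x z = 1).

Definition PiH_identity : Prop :=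
  forall x x', \sum_z Pi x z * H z x' = (x == x')%:R.

Definition Lam_max : R := \big[Num.max/0]_(p : X * Xh) Lam p.1 p.2.

Definition rho (s : Sym) (x : X) : R := \sum_z Lam x (s z) * Pi x z.

Definition ell (z : Z) (s : Sym) : R := \sum_x H z x * rho s x.

Definition ell_max : R :=
  \big[Num.max/0]_(p : (Z * Sym) * (Z * Sym)) (ell p.1.1 p.1.2 - ell p.2.1 p.2.2).

Definition L_max : R := Lam_max + ell_max.

Variable n : nat.

Definition switches (S : {ffun 'I_n -> Sym}) : nat :=
  #|[set p : 'I_n * 'I_n | (val p.2 == (val p.1).+1) && (S p.1 != S p.2)]|.

Definition Lloss (S : {ffun 'I_n -> Sym}) (x : {ffun 'I_n -> X})
  (z : {ffun 'I_n -> Z}) : R :=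
  n%:R^-1 * \sum_(t < n) Lam (x t) (S t (z t)).

Definition Ltilde (S : {ffun 'I_n -> Sym}) (z : {ffun 'I_n -> Z}) : R :=
  n%:R^-1 * \sum_(t < n) ell (z t) (S t).

(* D_{0,m}(x^n,z^n) = min over S in S^n_{0,m} of L_S(x^n,z^n)
   (the set is nonempty whenever Sym is; default 0 otherwise) *)
Definition D0m (m : nat) (x : {ffun 'I_n -> X}) (z : {ffun 'I_n -> Z}) : R :=
  match [pick S : {ffun 'I_n -> Sym} | switches S <= m]%N with
  | Some S0 => \big[Num.min/Lloss S0 x z]_(S : {ffun 'I_n -> Sym} | (switches S <= m)%N)
                 Lloss S x z
  | None => 0
  end.

(* Pr(Z^n in E) for the memoryless channel with deterministic input x^n *)
Definition Prob (x : {ffun 'I_n -> X}) (E : pred {ffun 'I_n -> Z}) : R :=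
  \sum_(z : {ffun 'I_n -> Z} | E z) \prod_(t < n) Pi (x t) (z t).

End SDUDE.

Definition hb {R : realType} (p : R) : R :=
  - p * ln p - (1 - p) * ln (1 - p).

From Pilot Require Import Defs.
From mathcomp Require Import all_boot all_order all_algebra.
From mathcomp Require Import boolp reals topology normedtype.
From mathcomp Require Import interval_inference sequences exp convex.
From mathcomp Require Import ring lra zify.
Set Implicit Arguments. Unset Strict Implicit. Unset Printing Implicit Defensive.
Import Order.TTheory GRing.Theory Num.Theory.
Local Open Scope ring_scope.

(* Because [Pi H = I], the estimated loss [ell z s] is an unbiased estimate of the
   true single-letter loss under the channel, so for two fixed sequences S and S'
   the error [(L_S - Ltilde_S) - (L_S' - Ltilde_S')] is an average of n independent,
   zero-mean variables bounded by [L_max]; Hoeffding's inequality bounds its tail by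
   [exp (- n eps^2 / (2 L_max^2))].  If the S-DUDE output is eps-worse than the best
   sequence S' of the class, then, since it minimises [Ltilde], the pair
   (Shat, S') exhibits such a deviation.  A union bound over pairs finishes the
   proof: a sequence with at most m switches is determined by its switch positions
   (at most [e^(n h(m/n))] choices when [2m <= n]) and its m+1 values ([N^(m+1)]
   choices). *)

Lemma expR_le_chord (R : realType) (c y lam : R) : 0 < c -> -c <= y <= c ->
  expR (lam * y) <=
    ((c - y) * expR (- (lam * c)) + (c + y) * expR (lam * c)) / (2 * c).
Proof.
move=> c0 /andP[yc1 yc2]; set t := (c + y) / (2 * c).
have t0 : 0 <= t by rewrite divr_ge0 //; lra.
have t1 : t <= 1 by rewrite ler_pdivrMr; lra.
have -> : lam * y = t * (lam * c) + (1 - t) * - (lam * c) by rewrite /t; field; lra.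
have -> : ((c - y) * expR (- (lam * c)) + (c + y) * expR (lam * c)) / (2 * c) =
    t * expR (lam * c) + (1 - t) * expR (- (lam * c)) by rewrite /t; field; lra.
exact: (convex_expR (Itv01 t0 t1) (lam * c) (- (lam * c))).
Qed.

Lemma expn2_fact_le_fact_double (j : nat) : (2 ^ j * j`! <= (j.*2)`!)%N.
Proof.
elim: j => [|j IH] //.
rewrite doubleS !factS expnS mulnACA [in leqRHS]mulnA.
by apply: leq_mul => //; lia.
Qed.

Section ExpCoeff.
Variable R : realType.

Lemma exp_coeff_even (u : R) (j : nat) :
  exp_coeff (- u) j.*2 = exp_coeff u j.*2.
Proof. by rewrite /exp_coeff /= -mul2n !exprM sqrrN. Qed.

Lemma exp_coeff_odd (u : R) (j : nat) :
  exp_coeff (- u) j.*2.+1 = - exp_coeff u j.*2.+1.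
Proof. by rewrite /exp_coeff /= !exprSr -mul2n exprM sqrrN -exprM mulrN mulNr. Qed.

Lemma exp_coeff_sym_ge0 (u : R) (k : nat) : 0 <= exp_coeff u k + exp_coeff (- u) k.
Proof.
rewrite -[k]odd_double_half; case: (odd k); rewrite ?add0n ?add1n.
  by rewrite exp_coeff_odd subrr.
rewrite exp_coeff_even /exp_coeff /= -mul2n exprM.
by apply: addr_ge0; rewrite divr_ge0 // exprn_ge0 // sqr_ge0.
Qed.

Lemma sum_exp_coeff_sym_double (u : R) (N : nat) :
  \sum_(0 <= k < N.*2) (exp_coeff u k + exp_coeff (- u) k) =
  \sum_(0 <= j < N) 2 * exp_coeff u j.*2.
Proof.
elim: N => [|N IH]; first by rewrite !big_geq.
rewrite doubleS !big_nat_recr //= IH -addrA exp_coeff_even exp_coeff_odd.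
by rewrite subrr addr0 mulr_natl mulr2n.
Qed.

Lemma exp_coeff_double_le (u : R) (j : nat) :
  exp_coeff u j.*2 <= exp_coeff (u ^+ 2 / 2) j.
Proof.
rewrite /exp_coeff /=.
have -> : (u ^+ 2 / 2) ^+ j / j`!%:R = u ^+ j.*2 / (2 ^ j * j`!)%:R.
  rewrite natrM natrX expr_div_n -exprM mul2n; field.
  by rewrite pnatr_eq0 -lt0n fact_gt0 expf_neq0 // pnatr_eq0.
apply: ler_wpM2l; first by rewrite -mul2n exprM exprn_ge0 // sqr_ge0.
rewrite lef_pV2 ?posrE ?ltr0n ?fact_gt0 ?muln_gt0 ?expn_gt0 ?fact_gt0 //.
by rewrite ler_nat expn2_fact_le_fact_double.
Qed.

(* Only the even coefficients of [cosh] survive, and [(2j)! >= 2^j j!]. *)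
Lemma cosh_le_expR_sqr_half (u : R) :
  (expR u + expR (- u)) / 2 <= expR (u ^+ 2 / 2).
Proof.
have cvg_exp := @is_cvg_series_exp_coeff R.
rewrite ler_pdivrMr // mulrC /expR -lim_seriesD // -[leRHS]lim_seriesZ //.
apply: ler_lim; [exact: is_cvg_seriesD | exact: is_cvg_seriesZ |].
apply: nearW => N; rewrite /series /=.
have widen : \sum_(0 <= k < N) (exp_coeff u k + exp_coeff (- u) k) <=
    \sum_(0 <= k < N.*2) (exp_coeff u k + exp_coeff (- u) k).
  rewrite [leRHS](@big_cat_nat _ _ _ N) //= -?addnn ?leq_addr // lerDl.
  by rewrite sumr_ge0 // => k _; exact: exp_coeff_sym_ge0.
apply: (le_trans widen); rewrite sum_exp_coeff_sym_double.
by apply: ler_sum => j _; rewrite ler_pM2l ?exp_coeff_double_le.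
Qed.
End ExpCoeff.

Section Hoeffding.
Variable R : realType.

Lemma hoeffding_lemma (W : finType) (q Y : W -> R) (c lam : R) :
  0 < c -> (forall w, 0 <= q w) -> \sum_w q w = 1 -> \sum_w q w * Y w = 0 ->
  (forall w, -c <= Y w <= c) ->
  \sum_w q w * expR (lam * Y w) <= expR ((lam * c) ^+ 2 / 2).
Proof.
move=> c0 q0 q1 qY0 Yc.
set A := expR (- (lam * c)); set B := expR (lam * c).
apply: (@le_trans _ _ (\sum_w q w * (((c - Y w) * A + (c + Y w) * B) / (2 * c)))).
  by apply: ler_sum => w _; rewrite ler_wpM2l ?expR_le_chord.
have split_chord w : q w * (((c - Y w) * A + (c + Y w) * B) / (2 * c)) =
    q w * ((B + A) / 2) + q w * Y w * ((B - A) / (2 * c)).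
  by field; lra.
rewrite (eq_bigr _ (fun w _ => split_chord w)) big_split /= -!mulr_suml.
by rewrite q1 qY0 mul0r addr0 mul1r; apply: cosh_le_expR_sqr_half.
Qed.

Lemma sum_prod_distr (I W : finType) (q : I -> W -> R) :
  (forall i, \sum_w q i w = 1) ->
  \sum_(z : {ffun I -> W}) \prod_i q i (z i) = 1.
Proof. by move=> q1; rewrite -bigA_distr_bigA big1 // => i _; rewrite q1. Qed.

Section ProductDistribution.
Variables (I W : finType) (q Y : I -> W -> R) (c : R).
Hypotheses (q_ge0 : forall i w, 0 <= q i w) (q_sum1 : forall i, \sum_w q i w = 1).
Hypotheses (Y_mean0 : forall i, \sum_w q i w * Y i w = 0).
Hypothesis Y_bounded : forall i w, -c <= Y i w <= c.

Lemma chernoff_prod (lam a : R) : 0 < c -> 0 <= lam ->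
  \sum_(z : {ffun I -> W} | a < \sum_i Y i (z i)) \prod_i q i (z i)
   <= expR (- (lam * a) + #|I|%:R * ((lam * c) ^+ 2 / 2)).
Proof.
move=> c0 lam0.
pose tilt (z : {ffun I -> W}) := expR (lam * (\sum_i Y i (z i) - a)).
apply: (@le_trans _ _ (\sum_(z : {ffun I -> W}) \prod_i q i (z i) * tilt z)).
  rewrite big_mkcond /=; apply: ler_sum => z _.
  have p0 : 0 <= \prod_i q i (z i) by apply: prodr_ge0.
  case: ifP => [aY|_]; last by rewrite mulr_ge0 ?expR_ge0.
  by rewrite ler_peMr // -expR0 ler_expR mulr_ge0 // subr_ge0 ltW.
have tiltE (z : {ffun I -> W}) : \prod_i q i (z i) * tilt z =
    expR (- (lam * a)) * \prod_i (q i (z i) * expR (lam * Y i (z i))).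
  by rewrite big_split /= mulrCA /tilt mulrBr addrC expRD mulr_sumr expR_sum.
rewrite (eq_bigr _ (fun z _ => tiltE z)) -mulr_sumr.
rewrite -(bigA_distr_bigA (fun i w => q i w * expR (lam * Y i w))) /= expRD.
rewrite ler_wpM2l ?expR_ge0 // expRM_natl -prodr_const.
apply: ler_prod => i _; rewrite sumr_ge0 /= => [|w _]; last first.
  by rewrite mulr_ge0 ?expR_ge0.
exact: hoeffding_lemma.
Qed.

Lemma hoeffding_inequality (eps : R) : 0 <= c -> 0 <= eps ->
  \sum_(z : {ffun I -> W} | #|I|%:R * eps < \sum_i Y i (z i)) \prod_i q i (z i)
   <= expR (- (#|I|%:R * (eps ^+ 2 / (2 * c ^+ 2)))).
Proof.
move=> c_ge0 eps0; have [c0|c_gt0] := eqVneq c 0; last first.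
  have c0 : 0 < c by rewrite lt_def c_gt0.
  apply: le_trans (@chernoff_prod (eps / c ^+ 2) (#|I|%:R * eps) c0 _) _.
    by rewrite divr_ge0 ?exprn_ge0.
  by rewrite le_eqVlt; apply/predU1l; congr expR; field.
(* for [c = 0] the bound is [expR 0 = 1], since [x / 0 = 0] *)
rewrite c0 expr0n mulr0 invr0 !mulr0 oppr0 expR0 -[leRHS](@sum_prod_distr _ _ q q_sum1).
rewrite [leRHS](bigID (fun z : {ffun I -> W} => #|I|%:R * eps < \sum_i Y i (z i))) /=.
by rewrite lerDl sumr_ge0 // => z _; apply: prodr_ge0.
Qed.

End ProductDistribution.
End Hoeffding.

Section BinaryEntropy.
Variable R : realType.

Lemma entropy_weightE (n m : nat) : (m < n)%N ->
  (m%:R / n%:R) ^+ m * (1 - m%:R / n%:R) ^+ (n - m) =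
  expR (- (n%:R * hb (m%:R / n%:R))) :> R.
Proof.
case: m => [_|m mn].
  by rewrite mul0r expr0 mul1r subr0 expr1n /hb subr0 ln1 -expR0; congr expR; ring.
set p : R := m.+1%:R / n%:R.
have n0 : 0 < n%:R :> R by rewrite ltr0n; lia.
have np : n%:R * p = m.+1%:R by rewrite /p mulrC divfK // gt_eqF.
have p0 : 0 < p by rewrite /p divr_gt0 // ltr0n.
have q0 : 0 < 1 - p by rewrite subr_gt0 /p ltr_pdivrMr // mul1r ltr_nat.
rewrite -{1}(lnK p0) -{1}(lnK q0) -!expRM_natl -expRD /hb natrB ?(ltnW mn) //.
by congr expR; rewrite -np; ring.
Qed.

Lemma prod_ffun_boolE (T : finType) (f : {ffun T -> bool}) (a b : R) :
  \prod_t (if f t then a else b) =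
  a ^+ #|[set t | f t]| * b ^+ (#|T| - #|[set t | f t]|).
Proof.
rewrite -(cardsC [set t | f t]) addKn (bigID (fun t => f t)) /=.
rewrite (eq_bigr (fun _ => a)) => [|t ->] //.
rewrite [X in _ * X](eq_bigr (fun _ => b)) => [|t /negbTE ->] //.
by rewrite !prodr_const; congr (_ ^+ _ * _ ^+ _); apply: eq_card => t; rewrite !inE.
Qed.

Lemma card_small_support_le_expR (n m : nat) : (0 < n)%N -> (m.*2 <= n)%N ->
  #|[set f : {ffun 'I_n -> bool} | (#|[set t | f t]| <= m)%N]|%:R
    <= expR (n%:R * hb (m%:R / n%:R)) :> R.
Proof.
move=> n0 mn; set p : R := m%:R / n%:R.
have nR0 : 0 < n%:R :> R by rewrite ltr0n.
have p0 : 0 <= p by rewrite divr_ge0.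
have p_half : p <= 1 - p.
  rewrite lerBrDr -mulr2n -mulr_natr /p mulrAC ler_pdivrMr // mul1r.
  by rewrite -natrM ler_nat muln2.
pose wt (f : {ffun 'I_n -> bool}) := \prod_t (if f t then p else 1 - p).
have wt_sum1 : \sum_f wt f = 1.
  by apply: (@sum_prod_distr R _ _ (fun _ (b : bool) => if b then p else 1 - p)) => t;
    rewrite big_bool /=; ring.
set c := p ^+ m * (1 - p) ^+ (n - m).
have c_le_wt (f : {ffun 'I_n -> bool}) : (#|[set t | f t]| <= m)%N -> c <= wt f.
  rewrite /wt prod_ffun_boolE card_ord; set k := #|[set t | f t]| => km.
  rewrite /c (_ : n - k = n - m + (m - k))%N; last by lia.
  rewrite -{1}(subnKC km) !exprD -mulrA ler_wpM2l ?exprn_ge0 // mulrC.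
  by rewrite ler_wpM2l ?exprn_ge0 ?lerXn2r ?nnegrE //; lra.
have cE : c = expR (- (n%:R * hb p)) by apply: entropy_weightE; lia.
have c0 : 0 < c by rewrite cE expR_gt0.
rewrite -[n%:R * _]opprK expRN -cE -[c^-1]mul1r ler_pdivlMr //.
rewrite mulr_natl -sumr_const -[leRHS]wt_sum1.
rewrite [leRHS](bigID (mem [set f : {ffun 'I_n -> bool} | (#|[set t | f t]| <= m)%N])).
apply: ler_wpDr.
  by apply: sumr_ge0 => f _; apply: prodr_ge0 => t _; case: (f t); lra.
by apply: ler_sum => f; rewrite inE; exact: c_le_wt.
Qed.

End BinaryEntropy.

Section SwitchCount.
Variables (T : finType) (n : nat).
Implicit Types (S : {ffun 'I_n -> T}) (f : {ffun 'I_n -> bool}).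

(* [switches] of the definitions is [switch_count] at [T := Sym Z Xh]. *)
Definition switch_count S : nat :=
  #|[set p : 'I_n * 'I_n | (val p.2 == (val p.1).+1) && (S p.1 != S p.2)]|.

Definition switch_marks S : {ffun 'I_n -> bool} :=
  [ffun t => [exists t' : 'I_n, (val t == (val t').+1) && (S t' != S t)]].

Definition block_index f (t : 'I_n) : nat := #|[set j : 'I_n | f j && (j <= t)%N]|.

Lemma card_switch_marks S : #|[set t | switch_marks S t]| = switch_count S.
Proof.
rewrite /switch_count -(@card_in_imset _ _ (fun p : 'I_n * 'I_n => p.2)).
  apply: eq_card => t; rewrite !inE ffunE.
  apply/existsP/imsetP => [[t' tS]|[[t1 t2]]]; first by exists (t', t); rewrite ?inE.
  by rewrite inE /= => tS ->; exists t1.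
move=> [a1 a2] [b1 b2]; rewrite !inE /= => /andP[/eqP a21 _] /andP[/eqP b21 _] e.
by subst b2; congr (_, _); apply: val_inj; move: a21 b21 => /= -> [].
Qed.

Lemma block_index_mono f (t t' : 'I_n) :
  (t <= t')%N -> (block_index f t <= block_index f t')%N.
Proof.
move=> tt'; apply/subset_leq_card/subsetP => j; rewrite !inE.
by case/andP=> -> /= /leq_trans; apply.
Qed.

Lemma block_index_le f t : (block_index f t <= #|[set j | f j]|)%N.
Proof. by apply/subset_leq_card/subsetP => j; rewrite !inE => /andP[]. Qed.

Lemma block_index_switch {S} {t t' : 'I_n} : (t < t')%N -> switch_marks S t' ->
  (block_index (switch_marks S) t < block_index (switch_marks S) t')%N.
Proof.
move=> tt' mark; apply/proper_card/properP; split.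
  apply/subsetP => j; rewrite !inE => /andP[-> /= jt].
  by apply: leq_trans jt (ltnW tt').
by exists t'; rewrite !inE ?mark ?leqnn //= -ltnNge.
Qed.

Lemma eq_block_index_const_add S d (t t' : 'I_n) : (t' : nat) = (t + d)%N ->
  block_index (switch_marks S) t = block_index (switch_marks S) t' -> S t = S t'.
Proof.
elim: d t' => [|d IH] t' t't bt.
  by rewrite (_ : t' = t) //; apply: val_inj; rewrite /= t't addn0.
have td : (t + d < n)%N by apply: leq_trans (ltn_ord t'); rewrite t't addnS.
pose t'' : 'I_n := Ordinal td.
have bt'' : block_index (switch_marks S) t = block_index (switch_marks S) t''.
  apply/eqP; rewrite eqn_leq block_index_mono ?leq_addr //= bt.
  by apply: block_index_mono; rewrite /= t't addnS.
rewrite (IH t'' erefl bt''); apply/eqP/negPn/negP => jump.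
have lt_t'' : (t'' < t')%N by rewrite /= t't addnS.
have mark : switch_marks S t'.
  by rewrite ffunE; apply/existsP; exists t''; rewrite jump /= t't addnS eqxx.
by have := block_index_switch lt_t'' mark; rewrite -bt'' bt ltnn.
Qed.

Lemma eq_block_index_const {S} {t t' : 'I_n} :
  block_index (switch_marks S) t = block_index (switch_marks S) t' -> S t = S t'.
Proof.
have [tt'|t't] := leqP t t'.
  by apply: (@eq_block_index_const_add S (t' - t)); rewrite subnKC.
by move/esym/(@eq_block_index_const_add S (t - t')) => <- //; rewrite subnKC // ltnW.
Qed.

Definition switch_code (m : nat) (t0 : 'I_n) S : {ffun 'I_n -> bool} * {ffun 'I_m.+1 -> T} :=
  (switch_marks S,
   [ffun i : 'I_m.+1 => S (odflt t0 [pick t | block_index (switch_marks S) t == i])]).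

Lemma card_switch_count_le (m : nat) : 'I_n ->
  (#|[set S | switch_count S <= m]| <=
   #|[set f : {ffun 'I_n -> bool} | #|[set t | f t]| <= m]| * #|T| ^ m.+1)%N.
Proof.
move=> t0; rewrite -(@card_in_imset _ _ (switch_code m t0)).
  have -> : (#|T| ^ m.+1 = #|[set: {ffun 'I_m.+1 -> T}]|)%N.
    by rewrite cardsT card_ffun card_ord.
  rewrite -cardsX.
  apply/subset_leq_card/subsetP => code /imsetP[S].
  by rewrite !inE => Sm ->; rewrite /= card_switch_marks Sm.
move=> S1 S2; rewrite !inE => S1m _ [marks values]; apply/ffunP => t.
have bt : (block_index (switch_marks S1) t < m.+1)%N.
  by rewrite ltnS (leq_trans (block_index_le _ _)) // card_switch_marks.
have := congr1 (fun g : {ffun 'I_m.+1 -> T} => g (Ordinal bt)) values.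
rewrite !ffunE -marks; case: pickP => [t1 /eqP /= b1 | /(_ t)]; last by rewrite eqxx.
have b2 := b1; rewrite marks in b2.
by rewrite (eq_block_index_const b1) (eq_block_index_const b2).
Qed.

Lemma card_switch_count_le_expR (R : realType) (m : nat) :
  (0 < n)%N -> (m.*2 <= n)%N ->
  #|[set S : {ffun 'I_n -> T} | (switch_count S <= m)%N]|%:R
    <= expR (n%:R * hb (m%:R / n%:R) + m.+1%:R * ln #|T|%:R) :> R.
Proof.
move=> n0 mn; have := card_switch_count_le m (Ordinal n0).
have [->|T0] := posnP #|T|.
  by rewrite exp0n // muln0 leqn0 => /eqP ->; rewrite expR_ge0.
rewrite -(ler_nat R) => /le_trans; apply; rewrite natrM natrX expRD.
by rewrite ler_pM ?card_small_support_le_expR // expRM_natl lnK // posrE ltr0n.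
Qed.

End SwitchCount.

Section Prob.
Variables (R : realType) (X Z : finType) (Pi : X -> Z -> R) (n : nat).
Variable x : {ffun 'I_n -> X}.
Hypothesis Pi_ge0 : forall x z, 0 <= Pi x z.

Lemma Prob_cover (I : finType) (A : {pred I}) (E : pred {ffun 'I_n -> Z})
    (F : I -> pred {ffun 'I_n -> Z}) :
  (forall z, E z -> exists2 i, i \in A & F i z) ->
  Prob Pi x E <= \sum_(i in A) Prob Pi x (F i).
Proof.
move=> cover; pose p z := \prod_(t < n) Pi (x t) (z t).
have p0 z : 0 <= p z by apply: prodr_ge0.
rewrite /Prob; under [leRHS]eq_bigr do rewrite big_mkcond /=.
rewrite exchange_big /= big_mkcond /=; apply: ler_sum => z _.
have sum_ge0 (P : pred I) : 0 <= \sum_(i | P i) (if F i z then p z else 0).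
  by apply: sumr_ge0 => i _; case: ifP.
case: ifP => [/cover[i Ai Fiz]|_]; last exact: sum_ge0.
by rewrite (bigD1 i) //= Fiz lerDl sum_ge0.
Qed.
End Prob.

Section SDude.
Variables (R : realType) (X Z Xh : finType).
Variables (Pi : X -> Z -> R) (H : Z -> X -> R) (Lam : X -> Xh -> R).
Local Notation Sym := (Sym Z Xh).
Local Notation ell := (ell Pi H Lam).
Local Notation L_max := (L_max Pi H Lam).
Hypothesis PiH : PiH_identity Pi H.
Hypothesis Lam_ge0 : forall x xh, 0 <= Lam x xh.

Definition loss_gap (x : X) (s : Sym) (z : Z) : R := Lam x (s z) - ell z s.

Lemma ell_unbiased x s : \sum_z Pi x z * ell z s = \sum_z Pi x z * Lam x (s z).
Proof.
transitivity (\sum_x' (\sum_z Pi x z * H z x') * rho Pi Lam s x').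
  rewrite /Defs.ell; under eq_bigr do rewrite mulr_sumr.
  rewrite exchange_big /=; apply: eq_bigr => x' _; rewrite mulr_suml.
  by apply: eq_bigr => z _; rewrite mulrA.
under eq_bigr do rewrite PiH.
rewrite (bigD1 x) //= eqxx mul1r big1 ?addr0 => [|x' x'x]; last first.
  by rewrite eq_sym (negbTE x'x) mul0r.
by apply: eq_bigr => z _; rewrite mulrC.
Qed.

Lemma loss_gap_mean0 x s s' :
  \sum_z Pi x z * (loss_gap x s z - loss_gap x s' z) = 0.
Proof.
under eq_bigr do rewrite /loss_gap !mulrBr.
by rewrite !sumrB !ell_unbiased !subrr.
Qed.

Lemma loss_gap_bounded x s s' z :
  - L_max <= loss_gap x s z - loss_gap x s' z <= L_max.
Proof.
have Lam_le x' xh : Lam x' xh <= Lam_max Lam.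
  exact: (le_bigmax _ (fun p : X * Xh => Lam p.1 p.2) (x', xh)).
have ell_le z1 s1 z2 s2 : ell z1 s1 - ell z2 s2 <= ell_max Pi H Lam.
  exact: (le_bigmax _ (fun p : (Z * Sym) * (Z * Sym) =>
    ell p.1.1 p.1.2 - ell p.2.1 p.2.2) ((z1, s1), (z2, s2))).
have := Lam_le x (s z); have := Lam_le x (s' z).
have := Lam_ge0 x (s z); have := Lam_ge0 x (s' z).
have := ell_le z s z s'; have := ell_le z s' z s.
by rewrite /loss_gap /Defs.L_max => *; apply/andP; split; lra.
Qed.

Lemma L_max_ge0 : 0 <= L_max.
Proof. by rewrite addr_ge0 ?bigmax_ge_id. Qed.

Variable n : nat.
Implicit Types (S : {ffun 'I_n -> Sym}) (x : {ffun 'I_n -> X}) (z : {ffun 'I_n -> Z}).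

Lemma sum_loss_gap S S' x z : (0 < n)%N ->
  \sum_t (loss_gap (x t) (S t) (z t) - loss_gap (x t) (S' t) (z t)) =
  n%:R * (Lloss Lam S x z - Lloss Lam S' x z) +
  n%:R * (Ltilde Pi H Lam S' z - Ltilde Pi H Lam S z).
Proof.
move=> n0; rewrite /Lloss /Ltilde -!mulrBr !mulVKf ?pnatr_eq0 -?lt0n //.
by rewrite -!sumrB -big_split /=; apply: eq_bigr => t _; rewrite /loss_gap; ring.
Qed.

Definition gap_deviation x (eps : R) (P : {ffun 'I_n -> Sym} * {ffun 'I_n -> Sym}) z :=
  n%:R * eps < \sum_t (loss_gap (x t) (P.1 t) (z t) - loss_gap (x t) (P.2 t) (z t)).

Lemma Prob_gap_deviation x eps P : stochastic Pi -> 0 <= eps ->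
  Prob Pi x (gap_deviation x eps P) <= expR (- (n%:R * (eps ^+ 2 / (2 * L_max ^+ 2)))).
Proof.
move=> [Pi_ge0 Pi_sum1] eps0.
rewrite /Prob /gap_deviation -[n in n%:R](card_ord n).
apply: (@hoeffding_inequality _ _ _ (fun t => Pi (x t))
  (fun t (w : Z) => loss_gap (x t) (P.1 t) w - loss_gap (x t) (P.2 t) w)) => //.
- by move=> t; apply: loss_gap_mean0.
- by move=> t w; apply: loss_gap_bounded.
- exact: L_max_ge0.
Qed.

Lemma excess_loss_gap_deviation m x z eps Sh : (0 < n)%N ->
  (switches Sh <= m)%N ->
  (forall S, (switches S <= m)%N -> Ltilde Pi H Lam Sh z <= Ltilde Pi H Lam S z) ->
  eps < Lloss Lam Sh x z - D0m Lam m x z ->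
  exists2 S, (switches S <= m)%N & gap_deviation x eps (Sh, S) z.
Proof.
move=> n0 Shm Sh_min.
have nR0 : 0 < n%:R :> R by rewrite ltr0n.
have dev S : (switches S <= m)%N -> Lloss Lam S x z < Lloss Lam Sh x z - eps ->
    gap_deviation x eps (Sh, S) z.
  move=> Sm lt_loss; rewrite /gap_deviation sum_loss_gap //=.
  have := Sh_min S Sm; rewrite -subr_ge0 => /(mulr_ge0 (ltW nR0)).
  have : n%:R * eps < n%:R * (Lloss Lam Sh x z - Lloss Lam S x z).
    by rewrite ltr_pM2l //; lra.
  lra.
rewrite /D0m; case: pickP => [S0 S0m|none]; last by have := none Sh; rewrite Shm.
rewrite ltrBrDl -ltrBrDr => /bigmin_ltP[lt0|[S Sm ltS]].
  by exists S0; rewrite ?dev.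
by exists S; rewrite ?dev.
Qed.

End SDude.

Theorem theorem2 (R : realType) (X Z Xh : finType)
  (Pi : X -> Z -> R) (H : Z -> X -> R) (Lam : X -> Xh -> R)
  (hPi : stochastic Pi)
  (hrank : \rank (Pi_mx Pi) = #|X|)
  (hH : PiH_identity Pi H)
  (hLam : forall x xh, 0 <= Lam x xh)
  (n m : nat) (hn : (2 <= n)%N) (hm : (m <= n./2)%N)
  (Shat : {ffun 'I_n -> Z} -> {ffun 'I_n -> Sym Z Xh})
  (hShat : forall z, (switches (Shat z) <= m)%N /\
     forall S : {ffun 'I_n -> Sym Z Xh}, (switches S <= m)%N ->
       Ltilde Pi H Lam (Shat z) z <= Ltilde Pi H Lam S z)
  (eps : R) (heps : 0 < eps) (x : {ffun 'I_n -> X}) :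
  Prob Pi x (fun z => Lloss Lam (Shat z) x z - D0m Lam m x z > eps)
  <= 2 * expR (- n%:R * (eps ^+ 2 / (2 * L_max Pi H Lam ^+ 2)
        - 2 * (hb (m%:R / n%:R) + m.+1%:R * ln (#|Sym Z Xh|%:R) / n%:R))).
Proof.
(* [hrank] only guarantees that some [H] with [Pi H = I] exists; [hH] provides it. *)
have n0 : (0 < n)%N by lia.
have m2n : (m.*2 <= n)%N by rewrite -(odd_double_half n) -leq_double in hm; lia.
pose A := [set S : {ffun 'I_n -> Sym Z Xh} | (switches S <= m)%N].
pose K : R := n%:R * hb (m%:R / n%:R) + m.+1%:R * ln #|Sym Z Xh|%:R.
pose a := eps ^+ 2 / (2 * L_max Pi H Lam ^+ 2).
have union_bound : Prob Pi x (fun z => Lloss Lam (Shat z) x z - D0m Lam m x z > eps)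
    <= \sum_(P in setX A A) Prob Pi x (gap_deviation Pi H Lam x eps P).
  apply: Prob_cover => [|z]; first by case: hPi.
  case: (hShat z) => Shm Sh_min /(excess_loss_gap_deviation n0 Shm Sh_min)[S Sm dev].
  by exists (Shat z, S); rewrite // !inE Shm.
have pair_bound P : Prob Pi x (gap_deviation Pi H Lam x eps P) <= expR (- (n%:R * a)).
  by apply: Prob_gap_deviation => //; exact: ltW.
have card_bound : #|A|%:R <= expR K by apply: card_switch_count_le_expR.
apply: le_trans union_bound _; apply: le_trans (ler_sum _ (fun P _ => pair_bound P)) _.
rewrite sumr_const cardsX -[expR _ *+ _]mulr_natl natrM -expr2.
apply: le_trans (_ : expR K ^+ 2 * expR (- (n%:R * a)) <= _).
  by rewrite ler_wpM2r ?expR_ge0 // lerXn2r ?nnegrE ?expR_ge0.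
rewrite -expRM_natl -expRD -[leLHS]mul1r ler_pM ?ler1n ?expR_ge0 // ler_expR.
rewrite le_eqVlt; apply/predU1l; rewrite -/a /K; field.
by rewrite pnatr_eq0 -lt0n.
Qed.
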